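(* Let $X$ be an $X$-set parameter and let $G=G_1\sqcup G_2$ be the disjoint union of graphs $G_1$ and $G_2$. Then $\mathscr{X}^{\rm TAR}(G)\cong\mathscr{X}^{\rm TAR}(G_1)\,\square\,\mathscr{X}^{\rm TAR}(G_2)$, via the correspondence $S\mapsto(S\cap V(G_1),S\cap V(G_2))$.
   Context: All graphs are simple, finite, with nonempty vertex set. An $X$-set parameter is a graph parameter $X(G)$ defined as the minimum cardinality of an $X$-set of $G$, where the $X$-sets of each graph are subsets of its vertex set determined by some property satisfying: (1) supersets (within $V(G)$) of $X$-sets are $X$-sets; (2) the empty set is never an $X$-set; (3) an $X$-set of a disconnected graph is the union of an $X$-set of each component; (4) if $G$ has no isolated vertices, every set of $|V(G)|-1$ vertices is an $X$-set. The $X$-TAR graph $\mathscr{X}^{\rm TAR}(G)$ has as vertices all $X$-sets of $G$, with $S_1,S_2$ adjacent iff $|S_1\ominus S_2|=1$. $\square$ denotes the Cartesian product of graphs: $(a_1,a_2)\sim(b_1,b_2)$ iff ($a_1=b_1$ and $a_2b_2$ is an edge) or ($a_2=b_2$ and $a_1b_1$ is an edge). *)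

From HB Require Import structures.
From mathcomp Require Import all_boot.
Set Implicit Arguments. Unset Strict Implicit. Unset Printing Implicit Defensive.

Definition is_graph (T : finType) (e : rel T) : Prop :=
  [/\ 0 < #|T|, symmetric e & irreflexive e].

Definition comp_type (T : finType) (e : rel T) (x : T) : finType :=
  {y : T | connect e x y}.

Definition comp_rel (T : finType) (e : rel T) (x : T) : rel (comp_type e x) :=
  fun u v => e (val u) (val v).

Definition comp_set (T : finType) (e : rel T) (x : T) (S : {set T})
  : {set comp_type e x} := [set y | val y \in S].
Arguments comp_set [T] e x S.
Arguments comp_rel [T] e x _ _.

Definition graph_iso (U V : finType) (r : rel U) (s : rel V) (f : U -> V) : Prop :=
  bijective f /\ forall a b, r a b = s (f a) (f b).

(* An X-set parameter: a choice, for every graph, of which vertex subsets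
   are X-sets, satisfying axioms (1)-(4) of the paper, plus invariance
   under graph isomorphism (implicit in "graph parameter"). *)
Record Xparam := {
  Xs : forall T : finType, rel T -> {set T} -> bool;
  X_super : forall (T : finType) (e : rel T), is_graph e ->
    forall S S' : {set T}, S \subset S' -> Xs e S -> Xs e S';
  X_empty : forall (T : finType) (e : rel T), is_graph e -> ~~ Xs e set0;
  X_disconnected : forall (T : finType) (e : rel T), is_graph e ->
    (exists x y, ~~ connect e x y) ->
    forall S : {set T},
      Xs e S <->
        (forall x : T, Xs (comp_rel e x) (comp_set e x S));
  X_cofull : forall (T : finType) (e : rel T), is_graph e ->
    (forall x, exists y, e x y) ->
    forall S : {set T}, #|S| = #|T|.-1 -> Xs e S;
  X_iso : forall (T T' : finType) (e : rel T) (e' : rel T') (f : T -> T'),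
    is_graph e -> is_graph e' -> graph_iso e e' f ->
    forall S : {set T}, Xs e S = Xs e' (f @: S)
}.
Arguments Xs x [T] _ _.

Definition sum_rel (T1 T2 : finType) (e1 : rel T1) (e2 : rel T2) : rel (T1 + T2) :=
  fun u v => match u, v with
             | inl a, inl b => e1 a b
             | inr a, inr b => e2 a b
             | _, _ => false
             end.

Definition TARv (X : Xparam) (T : finType) (e : rel T) : finType :=
  {S : {set T} | Xs X e S}.

Definition TARrel (X : Xparam) (T : finType) (e : rel T) : rel (TARv X e) :=
  fun A B => #|(val A :\: val B) :|: (val B :\: val A)| == 1.

Definition cart_rel (U V : finType) (r : rel U) (s : rel V) : rel (U * V)%type :=
  fun a b => ((a.1 == b.1) && s a.2 b.2) || ((a.2 == b.2) && r a.1 b.1).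
Arguments TARrel X [T] e _ _.
Arguments TARv X [T] e.
Arguments graph_iso [U V] r s f.
Arguments cart_rel [U V] r s _ _.
Arguments sum_rel [T1 T2] e1 e2 _ _.

From mathcomp Require Import all_boot.
Set Implicit Arguments. Unset Strict Implicit. Unset Printing Implicit Defensive.

(* An X-set of a graph is exactly a family of X-sets of its components (axiom
   (3), together with isomorphism invariance when the graph is connected).
   Each component of G1 + G2 is a copy of a component of G1 or of G2, so S is
   an X-set of G1 + G2 iff S \cap V(G1) and S \cap V(G2) are X-sets of G1 and
   G2; S |-> (S \cap V(G1), S \cap V(G2)) is then a bijection of X-sets. Since
   the symmetric difference splits as the disjoint union of its two traces,
   |S (+) S'| = 1 iff one trace differs by one vertex and the other is equal,
   which is Cartesian-product adjacency. *)

Lemma connect_preserved (T : finType) (e : rel T) (P : T -> Prop) x y :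
  (forall a b, P a -> e a b -> P b) -> P x -> connect e x y -> P y.
Proof.
move=> stepP Px /connectP [p pth ->] {y}.
elim: p x Px pth => [|z p IHp] x Px //= /andP [exz pth].
exact: IHp (stepP _ _ Px exz) pth.
Qed.

Lemma is_graph_comp (T : finType) (e : rel T) x :
  is_graph e -> is_graph (comp_rel e x).
Proof.
case=> _ e_sym e_irr; split.
- by apply/card_gt0P; exists (exist _ x (connect0 e x)).
- by move=> u v; rewrite /comp_rel e_sym.
- by move=> u; rewrite /comp_rel e_irr.
Qed.

Lemma is_graph_sum (T1 T2 : finType) (e1 : rel T1) (e2 : rel T2) :
  is_graph e1 -> is_graph e2 -> is_graph (sum_rel e1 e2).
Proof.
case=> /card_gt0P [a _] e1_sym e1_irr [_ e2_sym e2_irr]; split.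
- by apply/card_gt0P; exists (inl a).
- by case=> u [] v //=; rewrite ?e1_sym ?e2_sym.
- by case=> u /=; rewrite ?e1_irr ?e2_irr.
Qed.

Lemma Xs_components (X : Xparam) (T : finType) (e : rel T) (S : {set T}) :
  is_graph e -> Xs X e S = [forall x, Xs X (comp_rel e x) (comp_set e x S)].
Proof.
move=> ge.
suff XsP : Xs X e S <-> forall x, Xs X (comp_rel e x) (comp_set e x S).
  by apply/idP/forallP => /XsP.
have [/existsP [x /existsP [y nxy]] | ] :=
  boolP [exists x, exists y, ~~ connect e x y].
  by apply: (X_disconnected X ge); exists x, y.
move/existsPn=> e_conn.
have conn x y : connect e x y.
  by apply/negPn; move: (e_conn x) => /existsPn.
have Xs_comp x : Xs X e S = Xs X (comp_rel e x) (comp_set e x S).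
  pose k y : comp_type e x := exist _ y (conn x y).
  have k_bij : bijective k by exists val => // z; apply: val_inj.
  have k_iso : graph_iso e (comp_rel e x) k by [].
  rewrite (X_iso X ge (is_graph_comp x ge) k_iso); congr (Xs _ _ _).
  apply/setP => z; rewrite inE -[z](_ : k (val z) = z); last exact: val_inj.
  by rewrite mem_imset //; apply: bij_inj.
split=> [XS x | XS]; first by rewrite -Xs_comp.
by case: ge => /card_gt0P [x _] _ _; rewrite (Xs_comp x).
Qed.

(* An injective map whose image is a union of components, as inl and inr are
   for a disjoint union, maps each component isomorphically. *)
Section ComponentEmbedding.

Variables (T U : finType) (eT : rel T) (eU : rel U) (i : T -> U).
Hypotheses (i_inj : injective i) (i_edge : forall a b, eU (i a) (i b) = eT a b)
  (i_open : forall a v, eU (i a) v -> exists b, v = i b).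

Lemma connect_embed x y : connect eT x y -> connect eU (i x) (i y).
Proof.
apply: (connect_preserved (P := fun a => connect eU (i x) (i a))) => //.
by move=> a b xa eab; apply: connect_trans xa (connect1 _); rewrite i_edge.
Qed.

Lemma connect_embed_inv x v :
  connect eU (i x) v -> exists2 b, v = i b & connect eT x b.
Proof.
apply: (connect_preserved (P := fun a => exists2 b, a = i b & connect eT x b)).
- move=> _ c [b -> xb] ebc; have [d cd] := i_open ebc; exists d => //.
  by apply: connect_trans xb (connect1 _); rewrite -i_edge -cd.
- by exists x.
Qed.

Variable x : T.

Definition comp_embed (y : comp_type eT x) : comp_type eU (i x) :=
  exist _ (i (val y)) (connect_embed (valP y)).

Lemma comp_embed_iso : graph_iso (comp_rel eT x) (comp_rel eU (i x)) comp_embed.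
Proof.
have embed_inj : injective comp_embed.
  by move=> a b /(congr1 val) /i_inj; apply: val_inj.
have embed_onto z : z \in codom comp_embed.
  have [b zb xb] := connect_embed_inv (valP z).
  by apply/codomP; exists (exist _ b xb); apply: val_inj.
split; last by move=> a b; rewrite /comp_rel /= i_edge.
by exists (fun z => iinv (embed_onto z)) => y; rewrite ?iinv_f ?f_iinv.
Qed.

Lemma comp_set_embed (S : {set U}) :
  comp_embed @: comp_set eT x (i @^-1: S) = comp_set eU (i x) S.
Proof.
have [g embedK gK] := comp_embed_iso.1.
apply/setP => z; rewrite -[z]gK mem_imset; last exact: can_inj embedK.
by rewrite !inE.
Qed.

End ComponentEmbedding.

Lemma Xs_comp_embed (X : Xparam) (T U : finType) (eT : rel T) (eU : rel U)
    (i : T -> U) (S : {set U}) (x : T) :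
  is_graph eT -> is_graph eU -> injective i ->
  (forall a b, eU (i a) (i b) = eT a b) ->
  (forall a v, eU (i a) v -> exists b, v = i b) ->
  Xs X (comp_rel eU (i x)) (comp_set eU (i x) S) =
  Xs X (comp_rel eT x) (comp_set eT x (i @^-1: S)).
Proof.
move=> gT gU i_inj i_edge i_open.
rewrite (X_iso X (is_graph_comp x gT) (is_graph_comp (i x) gU)
                 (comp_embed_iso i_inj i_edge i_open x)).
by rewrite comp_set_embed.
Qed.

Lemma Xs_sum (X : Xparam) (T1 T2 : finType) (e1 : rel T1) (e2 : rel T2)
    (S : {set T1 + T2}) :
  is_graph e1 -> is_graph e2 ->
  Xs X (sum_rel e1 e2) S <-> Xs X e1 (inl @^-1: S) /\ Xs X e2 (inr @^-1: S).
Proof.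
move=> g1 g2; have gs := is_graph_sum g1 g2.
have Xs_inl a : Xs X (comp_rel (sum_rel e1 e2) (inl a))
                   (comp_set (sum_rel e1 e2) (inl a) S)
              = Xs X (comp_rel e1 a) (comp_set e1 a (inl @^-1: S)).
  by apply: Xs_comp_embed => // [? ? [] // | ? [b|b] // _]; exists b.
have Xs_inr b : Xs X (comp_rel (sum_rel e1 e2) (inr b))
                   (comp_set (sum_rel e1 e2) (inr b) S)
              = Xs X (comp_rel e2 b) (comp_set e2 b (inr @^-1: S)).
  by apply: Xs_comp_embed => // [? ? [] // | ? [a|a] // _]; exists a.
rewrite (Xs_components _ _ gs) (Xs_components _ _ g1) (Xs_components _ _ g2).
split=> [/forallP XS | [/forallP XS1 /forallP XS2]].
  by split; apply/forallP => y; [rewrite -Xs_inl | rewrite -Xs_inr].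
by apply/forallP => -[a|b]; [rewrite Xs_inl | rewrite Xs_inr].
Qed.

Definition symdiff (T : finType) (A B : {set T}) : {set T} :=
  (A :\: B) :|: (B :\: A).

Lemma card_symdiff_eq0 (T : finType) (A B : {set T}) :
  (#|symdiff A B| == 0) = (A == B).
Proof. by rewrite cards_eq0 setU_eq0 !setD_eq0 eqEsubset. Qed.

Lemma preimset_symdiff (aT rT : finType) (f : aT -> rT) (A B : {set rT}) :
  f @^-1: symdiff A B = symdiff (f @^-1: A) (f @^-1: B).
Proof. by rewrite /symdiff preimsetU !preimsetD. Qed.

Lemma card_sum_set (T1 T2 : finType) (S : {set T1 + T2}) :
  #|S| = #|inl @^-1: S| + #|inr @^-1: S|.
Proof.
rewrite -!sum1_card big_sumType.
by congr (_ + _); apply: eq_bigl => y; rewrite inE.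
Qed.

Definition sum_set (T1 T2 : finType) (A : {set T1}) (B : {set T2}) : {set T1 + T2} :=
  [set u | match u with inl a => a \in A | inr b => b \in B end].

Lemma preim_inl_sum_set (T1 T2 : finType) (A : {set T1}) (B : {set T2}) :
  inl @^-1: sum_set A B = A.
Proof. by apply/setP => a; rewrite !inE. Qed.

Lemma preim_inr_sum_set (T1 T2 : finType) (A : {set T1}) (B : {set T2}) :
  inr @^-1: sum_set A B = B.
Proof. by apply/setP => b; rewrite !inE. Qed.

Lemma sum_set_preim (T1 T2 : finType) (S : {set T1 + T2}) :
  sum_set (inl @^-1: S) (inr @^-1: S) = S.
Proof. by apply/setP => -[a|b]; rewrite !inE. Qed.

Section TARSum.

Variables (X : Xparam) (T1 T2 : finType) (e1 : rel T1) (e2 : rel T2).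
Hypotheses (g1 : is_graph e1) (g2 : is_graph e2).

Lemma TARrel_symdiff (T : finType) (e : rel T) (A B : TARv X e) :
  TARrel X e A B = (#|symdiff (val A) (val B)| == 1).
Proof. by []. Qed.

Lemma TARv_eq_symdiff (T : finType) (e : rel T) (A B : TARv X e) :
  (A == B) = (#|symdiff (val A) (val B)| == 0).
Proof. by rewrite card_symdiff_eq0. Qed.

Definition TAR_split (S : TARv X (sum_rel e1 e2)) : TARv X e1 * TARv X e2 :=
  (exist (Xs X e1) _ ((Xs_sum X (val S) g1 g2).1 (valP S)).1,
   exist (Xs X e2) _ ((Xs_sum X (val S) g1 g2).1 (valP S)).2).

Lemma Xs_sum_set (p : TARv X e1 * TARv X e2) :
  Xs X (sum_rel e1 e2) (sum_set (val p.1) (val p.2)).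
Proof.
apply/(Xs_sum X _ g1 g2).
by rewrite preim_inl_sum_set preim_inr_sum_set; split; apply: valP.
Qed.

Definition TAR_join (p : TARv X e1 * TARv X e2) : TARv X (sum_rel e1 e2) :=
  exist (Xs X (sum_rel e1 e2)) _ (Xs_sum_set p).

Lemma TAR_splitK : cancel TAR_split TAR_join.
Proof. by move=> S; apply: val_inj; apply: sum_set_preim. Qed.

Lemma TAR_joinK : cancel TAR_join TAR_split.
Proof.
move=> [A B]; congr pair; apply: val_inj => /=.
  exact: preim_inl_sum_set.
exact: preim_inr_sum_set.
Qed.

Lemma TAR_split_adj (S S' : TARv X (sum_rel e1 e2)) :
  TARrel X (sum_rel e1 e2) S S' =
  cart_rel (TARrel X e1) (TARrel X e2) (TAR_split S) (TAR_split S').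
Proof.
rewrite /cart_rel !TARrel_symdiff card_sum_set !preimset_symdiff addn_eq1.
by rewrite !TARv_eq_symdiff orbC; congr orb; apply: andbC.
Qed.

End TARSum.

Theorem proposition2p33 (X : Xparam) (T1 T2 : finType)
  (e1 : rel T1) (e2 : rel T2) :
  is_graph e1 -> is_graph e2 ->
  exists f : TARv X (sum_rel e1 e2) -> (TARv X e1 * TARv X e2)%type,
    graph_iso (TARrel X (sum_rel e1 e2))
              (cart_rel (TARrel X e1) (TARrel X e2)) f /\
    (forall S, val (f S).1 = inl @^-1: val S /\ val (f S).2 = inr @^-1: val S).
Proof.
move=> g1 g2; exists (TAR_split g1 g2); split=> //; split.
  by exists (TAR_join g1 g2); [apply: TAR_splitK | apply: TAR_joinK].
exact: TAR_split_adj.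
Qed.
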